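(* If the streaming algorithm $\mathcal A$ uses space at most $w$ bits, then for every fixing of all the strings $\Gamma$ sampled during the execution, all keys $(k_p)_{p\in\{0,1\}^d}$, and the random strings $r_1,r_2$, the resulting (deterministic) mechanism $\texttt{AnswerQueries}_{\vec\Gamma,\vec k,r_1,r_2}$ is transcript compressible to $w$ bits.
   Context: A statistical query is $q:\{0,1\}^d\to\{0,1\}$. In the accuracy game between a mechanism $\mathcal M$ holding a database $S\in(\{0,1\}^d)^n$ and an adversary $\mathbb A$: for $i=1,\dots,\ell$, $\mathbb A$ chooses $q_i$ (depending on previous answers), $\mathcal M$ answers $z_i$, $\mathbb A$ receives $z_i$; the output is the transcript $(q_1,z_1,\dots,q_\ell,z_\ell)$. $\mathcal M$ is transcript compressible to $b'$ bits if for every deterministic adversary $\mathbb A$ there is a set $H_{\mathbb A}$ of transcripts with $|H_{\mathbb A}|\le 2^{b'}$ such that for every database $S\in(\{0,1\}^d)^n$ the transcript lies in $H_{\mathbb A}$ with probability $1$. $\texttt{AnswerQueries}$ (built from a streaming algorithm $\mathcal A$ over the domain $\{0,1\}^d\times\{0,1\}^b$ and a function $\mathrm{PRG}:\{0,1\}^a\times\{0,1\}^b\to\{0,1\}$) on input $P=(p_1,\dots,p_n)$: (1) sample independent uniform keys $k_p\in\{0,1\}^b$ for all $p\in\{0,1\}^d$; (2) run $\mathcal A$ with random string $r_1$ and feed it $(p_1,k_{p_1}),\dots,(p_n,k_{p_n})$; (3) switch $\mathcal A$'s source of coins to random string $r_2$; (4) repeat $\ell=\frac{m-n}{(a+1)2^d}$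 times: receive a query $q$; for each $p\in\{0,1\}^d$ in lexicographic order, sample $\Gamma\in\{0,1\}^a$ uniformly, feed $\mathcal A$ $a$ updates whose first bits form $\Gamma$, then an update whose first bit is $\mathrm{PRG}(\Gamma,k_p)\oplus q(p)$; output $\mathcal A$'s output after this last update. The space of $\mathcal A$ is the number of bits of memory it retains between updates. *)

From mathcomp Require Import all_boot.
Set Implicit Arguments. Unset Strict Implicit. Unset Printing Implicit Defensive.

Definition point (d : nat) := (d.-tuple bool)%type.
Definition query (d : nat) := {ffun point d -> bool}.
Definition database (d n : nat) := (n.-tuple (point d))%type.

Definition det_mech (d n : nat) (Z : Type) :=
  database d n -> seq (query d) -> query d -> Z.

Definition adversary (d : nat) (Z : Type) := seq (query d * Z) -> query d.

Fixpoint game_aux d n (Z : Type) (M : det_mech d n Z) (S : database d n)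
    (Adv : adversary d Z) (k : nat) (tr : seq (query d * Z)) : seq (query d * Z) :=
  match k with
  | 0 => tr
  | k'.+1 =>
      let q := Adv tr in
      let z := M S (unzip1 tr) q in
      game_aux M S Adv k' (rcons tr (q, z))
  end.

Definition transcript d n (Z : Type) (l : nat) (M : det_mech d n Z)
    (Adv : adversary d Z) (S : database d n) : seq (query d * Z) :=
  game_aux M S Adv l [::].

(* Transcript compressible to b' bits (for a deterministic mechanism,
   "with probability 1" means "always"). *)
Definition transcript_compressible d n (Z : eqType) (l b' : nat)
    (M : det_mech d n Z) : Prop :=
  forall Adv : adversary d Z,
    exists H : seq (seq (query d * Z)),
      size H <= 2 ^ b' /\ forall S : database d n, transcript l M Adv S \in H.

Definition upd (d b : nat) := (point d * b.-tuple bool)%type.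

(* A streaming algorithm of space w: between updates it retains exactly a
   w-bit memory state.  Its behaviour may depend on its random string (of
   arbitrary type Rnd) and on the global index of the update. *)
Record streamAlg (d b w : nat) (Rnd Z : Type) := StreamAlg {
  sa_init : Rnd -> w.-tuple bool;
  sa_step : Rnd -> nat -> w.-tuple bool -> upd d b -> w.-tuple bool * Z
}.

Section Feed.
Variables (d b w : nat) (Rnd Z : Type) (A : streamAlg d b w Rnd Z) (r : Rnd).

Fixpoint feedS (t : nat) (s : w.-tuple bool) (us : seq (upd d b)) : w.-tuple bool :=
  match us with
  | [::] => s
  | u :: us' => feedS t.+1 (sa_step A r t s u).1 us'
  end.

Fixpoint feedNE (t : nat) (s : w.-tuple bool) (u : upd d b) (us : seq (upd d b))
    : w.-tuple bool * Z :=
  match us with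
  | [::] => sa_step A r t s u
  | u' :: us' => feedNE t.+1 (sa_step A r t s u).1 u' us'
  end.
End Feed.

Fixpoint lex_bits (d : nat) : seq (seq bool) :=
  match d with
  | 0 => [:: [::]]
  | d'.+1 => [seq false :: x | x <- lex_bits d'] ++ [seq true :: x | x <- lex_bits d']
  end.

Definition lex_enum (d : nat) : seq (point d) := pmap insub (lex_bits d).

Definition ell (d a n m : nat) : nat := (m - n) %/ ((a + 1) * 2 ^ d).

Section AnswerQueries.
Variables (d a b w n : nat) (Rnd Z : Type) (A : streamAlg d b w Rnd Z).
Variable PRG : a.-tuple bool -> b.-tuple bool -> bool.
(* enc c : an update of {0,1}^d x {0,1}^b whose first bit is c. *)
Variable enc : bool -> upd d b.
(* G i p : the string Gamma sampled in round i (0-based) for the point p. *)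
Variable G : nat -> point d -> a.-tuple bool.
Variable k : point d -> b.-tuple bool.
Variables r1 r2 : Rnd.

Definition round_upds (i : nat) (q : query d) : seq (upd d b) :=
  flatten [seq [seq enc c | c <- G i p] ++ [:: enc (xorb (PRG (G i p) (k p)) (q p))]
          | p <- lex_enum d].

Definition round_run (t : nat) (s : w.-tuple bool) (i : nat) (q : query d)
    : w.-tuple bool * Z :=
  let L := round_upds i q in feedNE A r2 t s (head (enc false) L) (behead L).

(* State after step (2): the database with keys, coins r1. *)
Definition phase1_state (S : database d n) : w.-tuple bool :=
  feedS A r1 0 (sa_init A r1) [seq (p, k p) | p <- S].

(* Replay the rounds for the previous queries (coins r2), from round i at
   index t: returns (state, index, next round number). *)
Fixpoint replay (t : nat) (s : w.-tuple bool) (i : nat) (qs : seq (query d))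
    : w.-tuple bool * nat * nat :=
  match qs with
  | [::] => (s, t, i)
  | q :: qs' =>
      replay (t + size (round_upds i q)) (round_run t s i q).1 i.+1 qs'
  end.

Definition AnswerQueries : det_mech d n Z :=
  fun S past q =>
    let: (s, t, i) := replay n (phase1_state S) 0 past in
    (round_run t s i q).2.
End AnswerQueries.

From mathcomp Require Import all_boot.

(* In the accuracy game the database S enters only through the
   answering function M S, and the transcript is a deterministic function of
   that answering function and the adversary.  With all of its randomness
   fixed, AnswerQueries reads S only during phase (2): afterwards it works
   solely from the w-bit memory state of the streaming algorithm at the end
   of that phase.  Every transcript is therefore the image of one of the
   2^w possible memory states, and the list of these images is the required
   set H_Adv. *)

Set Implicit Arguments. Unset Strict Implicit. Unset Printing Implicit Defensive.

Section Game.
Variables (d : nat) (Z : Type).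

Fixpoint play (F : seq (query d) -> query d -> Z) (Adv : adversary d Z)
    (l : nat) (tr : seq (query d * Z)) : seq (query d * Z) :=
  match l with
  | 0 => tr
  | l'.+1 => let q := Adv tr in play F Adv l' (rcons tr (q, F (unzip1 tr) q))
  end.

Lemma game_auxE n (M : det_mech d n Z) (S : database d n) Adv l tr :
  game_aux M S Adv l tr = play (M S) Adv l tr.
Proof. by elim: l tr => [|l IHl] tr //=; rewrite IHl. Qed.
End Game.

Lemma factored_compressible d n (Z : eqType) (T : finType) (l b' : nat)
    (M : det_mech d n Z) (state : database d n -> T)
    (F : T -> seq (query d) -> query d -> Z) :
  #|T| <= 2 ^ b' -> (forall S, M S = F (state S)) ->
  transcript_compressible l b' M.
Proof.
move=> cardT MF Adv.
exists [seq play (F s) Adv l [::] | s <- enum T]; split.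
  by rewrite size_map -cardE.
move=> S; rewrite /transcript game_auxE MF.
by apply: map_f; rewrite mem_enum.
Qed.

Section AnswerQueriesState.
Variables (d a b w n : nat) (Rnd Z : Type) (A : streamAlg d b w Rnd Z).
Variables (PRG : a.-tuple bool -> b.-tuple bool -> bool) (enc : bool -> upd d b).
Variables (G : nat -> point d -> a.-tuple bool) (k : point d -> b.-tuple bool).
Variables (r1 r2 : Rnd).

(* The answering phase (3)-(4) of AnswerQueries started from memory state s. *)
Definition answer_from (s : w.-tuple bool) (past : seq (query d)) (q : query d) : Z :=
  let: (s', t, i) := replay A PRG enc G k r2 n s 0 past in
  (round_run A PRG enc G k r2 t s' i q).2.

Lemma AnswerQueries_factors (S : database d n) :
  AnswerQueries A PRG enc G k r1 r2 S = answer_from (phase1_state A k r1 S).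
Proof. by []. Qed.
End AnswerQueriesState.

Lemma card_memory (w : nat) : #|{: w.-tuple bool}| = 2 ^ w.
Proof. by rewrite card_tuple card_bool. Qed.

Theorem claim5p2 (d a b w n m : nat) (Rnd : Type) (Z : eqType)
    (A : streamAlg d b w Rnd Z)
    (PRG : a.-tuple bool -> b.-tuple bool -> bool)
    (enc : bool -> upd d b)
    (G : nat -> point d -> a.-tuple bool)
    (k : point d -> b.-tuple bool)
    (r1 r2 : Rnd) :
  transcript_compressible (ell d a n m) w
    (AnswerQueries (n := n) A PRG enc G k r1 r2).
Proof.
apply: (factored_compressible _ _ (AnswerQueries_factors A PRG enc G k r1 r2)).
by rewrite card_memory.
Qed.
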